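(* Let $r_0>0$, let $q\colon\mathbb{R}\to[0,+\infty)$ be continuous with $\limsup_{|y|\to+\infty}q(y)/|y|<1$, and let $D_q:=\{z\in\mathbb{C}:-q(\mathrm{Im}\,z)<\mathrm{Re}\,z<q(\mathrm{Im}\,z)\}$. Let $\mu_0$ be a positive Borel measure on $\mathbb{C}$ with support contained in the closure of $D_q$, and set $\mu_0^i(y):=\mu_0(\{z:|\mathrm{Im}\,z|\le y\})$ for $y\ge0$; assume there is a constant $C$ with $\mu_0^i(y)\le Cy$ for all $y\ge0$. Put $Q(y):=q(y)+q(-y)$, $y\ge0$. Then there is $C_0\ge0$ such that for all $r_0\le r<R<+\infty$ $$l^{\mathrm{rh}}_{\mu_0}(r,R)\le\int_r^R\frac{Q(y)}{y^2}\,d\mu_0^i(y)+C_0.$$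
   Context: $l^{\mathrm{rh}}_{\mu_0}(r,R):=\int_{r<|z|\le R,\ \mathrm{Re}\,z>0}\mathrm{Re}\frac1z\,d\mu_0(z)$. The Stieltjes integral $\int_r^R\dots d\mu_0^i$ is taken over the interval $(r,R]$. *)

From HB Require Import structures.
From mathcomp Require Import all_boot all_order all_algebra.
From mathcomp Require Import all_classical all_reals all_analysis.
Set Implicit Arguments. Unset Strict Implicit. Unset Printing Implicit Defensive.
Import Order.TTheory GRing.Theory Num.Theory.
Import numFieldNormedType.Exports.
Local Open Scope classical_set_scope.
Local Open Scope ring_scope.

(* The complex plane is modelled as R * R, z = (Re z, Im z) = (z.1, z.2);
   its measurable structure is the product (= Borel) sigma-algebra,
   its topology the product (= Euclidean) topology. *)

Definition Dq (R : realType) (q : R -> R) : set (R * R) :=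
  [set z | - q z.2 < z.1 < q z.2].

Definition cabs (R : realType) (z : R * R) : R := Num.sqrt (z.1 ^+ 2 + z.2 ^+ 2).

Definition Re_inv (R : realType) (z : R * R) : R := z.1 / (z.1 ^+ 2 + z.2 ^+ 2).

Definition mu_i (R : realType) (mu0 : set (R * R) -> \bar R) (y : R) : \bar R :=
  mu0 [set z | `|z.2| <= y].

Definition lrh_set (R : realType) (r R' : R) : set (R * R) :=
  [set z : R * R | r < cabs z <= R' /\ 0 < z.1].

Definition lrh (R : realType) (mu0 : {measure set (R * R) -> \bar R}) (r R' : R)
  : \bar R :=
  (\int[mu0]_(z in lrh_set r R') (Re_inv z)%:E)%E.

From HB Require Import structures.
From mathcomp Require Import all_boot all_order all_algebra.
From mathcomp Require Import all_classical all_reals all_analysis.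
From mathcomp Require Import lra measurable_realfun.
Import Order.TTheory GRing.Theory Num.Theory.
Import numFieldNormedType.Exports.
Local Open Scope classical_set_scope.
Local Open Scope ring_scope.

(* Split the region {r < |z| <= R', Re z > 0} according to whether
   |Im z| <= r.  Near the real axis Re (1/z) <= 1/|z| < 1/r, while the mass
   there is at most mu_0^i(r) <= C r, so this part contributes at most C.
   Away from it, mu_0-almost every z lies in the closure of D_q, so
   0 < Re z <= q (Im z) and Re (1/z) <= Re z / (Im z)^2 <= Q(|Im z|)/|Im z|^2.
   Integrating a function of |Im z| against mu_0 is integrating against the
   image of mu_0 under z |-> |Im z|, whose distribution function on (0, +oo)
   is mu_0^i; so that part is bounded by the Stieltjes integral.  Hence
   C_0 = C works. *)

Section measurable_plane.
Context {R : realType}.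

Lemma open_measurable_pair (U : set (R * R)) : open U -> measurable U.
Proof.
move=> oU.
pose square (p : rat * rat * rat) : set (R * R) :=
  `]ratr p.1.1 - ratr p.2, ratr p.1.1 + ratr p.2[ `*`
  `]ratr p.1.2 - ratr p.2, ratr p.1.2 + ratr p.2[.
have -> : U = \bigcup_(p in [set p | square p `<=` U]) square p.
  apply/seteqP; split => [z Uz|z [p Up /Up]//].
  have /nbhs_ballP[e /= e0 zeU] := oU z Uz.
  have [a] := @rat_in_itvoo R 0 (e / 2) ltac:(by rewrite divr_gt0).
  rewrite in_itv /= => /andP[a0 ae].
  have rat_near (x : R) : exists b : rat, x - ratr a < ratr b < x + ratr a.
    have [b] := @rat_in_itvoo R (x - ratr a) (x + ratr a) ltac:(lra).
    by rewrite in_itv /=; exists b.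
  have [[b1 /andP[? ?]] [b2 /andP[? ?]]] := (rat_near z.1, rat_near z.2).
  exists (b1, b2, a).
    move=> w; rewrite /square /= !in_itv /= => -[/andP[? ?] /andP[? ?]].
    by apply: zeU; split; rewrite /ball /= ltr_norml; apply/andP; split; lra.
  by rewrite /square /= !in_itv /=; split; apply/andP; split; lra.
rewrite bigcup_mkcond; apply: countable_bigcupT_measurable; first exact: countableP.
by move=> p; case: ifPn => // _; apply: measurableX.
Qed.

Lemma measurable_inv : measurable_fun [set: R] (@GRing.inv R).
Proof.
rewrite -(setUv [set 0]) setUC.
apply/measurable_funU => //; first exact: measurableC.
split; last exact: measurable_fun_set1.
apply: open_continuous_measurable_fun; first exact/closed_openC/closed_eq.
by move=> x; rewrite inE => /eqP x0; exact: inv_continuous.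
Qed.

Lemma measurable_abs_snd : measurable_fun [set: R * R] (fun z : R * R => `|z.2|).
Proof. exact: measurableT_comp measurable_snd. Qed.

Lemma measurable_abs_snd_le (y : R) : measurable [set z : R * R | `|z.2| <= y].
Proof.
rewrite (_ : [set z | _] = (fun z : R * R => `|z.2|) @^-1` `]-oo, y]).
  by rewrite -[X in measurable X]setTI; exact: measurable_abs_snd.
by apply/seteqP; split => z; rewrite /= in_itv.
Qed.

Lemma measurable_sqr_cabs :
  measurable_fun [set: R * R] (fun z : R * R => z.1 ^+ 2 + z.2 ^+ 2).
Proof.
by apply: measurable_funD; apply: measurable_funX;
  [exact: measurable_fst|exact: measurable_snd].
Qed.

Lemma measurable_Re_inv : measurable_fun [set: R * R] (@Re_inv R).
Proof.
apply: measurable_funM; first exact: measurable_fst.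
exact: measurableT_comp measurable_inv measurable_sqr_cabs.
Qed.

Lemma measurable_cabs : measurable_fun [set: R * R] (@cabs R).
Proof.
apply: measurableT_comp measurable_sqr_cabs.
exact: continuous_measurable_fun (@sqrt_continuous R).
Qed.

Lemma measurable_lrh_set (r R' : R) : measurable (lrh_set r R').
Proof.
rewrite (_ : lrh_set r R' = @cabs R @^-1` `]r, R'] `&` fst @^-1` `]0, +oo[).
  apply: measurableI; rewrite -[X in measurable X]setTI.
    exact: measurable_cabs.
  exact: measurable_fst.
by apply/seteqP; split => z; rewrite /lrh_set /= !in_itv /= andbT.
Qed.

End measurable_plane.

Lemma closure_Dq_sub {R : realType} (q : R -> R) : continuous q ->
  closure (Dq q) `<=` [set z | z.1 <= q z.2].
Proof.
move=> cq.
pose gap (z : R * R) := q z.2 - z.1.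
have -> : [set z | z.1 <= q z.2] = gap @^-1` [set x | 0 <= x].
  by apply/seteqP; split => z; rewrite /= subr_ge0.
have /closure_id -> : closed (gap @^-1` [set x | 0 <= x]).
  have c_gap : continuous gap.
    move=> z; apply: continuousB; last exact: cvg_fst.
    by apply: continuous_comp; [exact: cvg_snd|exact: cq].
  have c0 : closed [set x : R | 0 <= x] by exact: closed_ge.
  exact: (continuous_closedP _).1 c_gap _ c0.
by apply: closureS => z /andP[_ /ltW]; rewrite /= subr_ge0.
Qed.

Section inverse_real_part.
Context {R : realType}.
Implicit Types (z : R * R) (r : R).

Lemma cabs_ge0 z : 0 <= cabs z.
Proof. exact: sqrtr_ge0. Qed.

Lemma sqr_cabs z : cabs z ^+ 2 = z.1 ^+ 2 + z.2 ^+ 2.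
Proof. by rewrite sqr_sqrtr // addr_ge0 // sqr_ge0. Qed.

Lemma abs_fst_le_cabs z : `|z.1| <= cabs z.
Proof. by rewrite -sqrtr_sqr ler_sqrt ?lerDl ?sqr_ge0 // addr_ge0 ?sqr_ge0. Qed.

Lemma abs_snd_le_cabs z : `|z.2| <= cabs z.
Proof. by rewrite -sqrtr_sqr ler_sqrt ?lerDr ?sqr_ge0 // addr_ge0 ?sqr_ge0. Qed.

Lemma Re_inv_ge0 z : 0 <= z.1 -> 0 <= Re_inv z.
Proof. by move=> x0; rewrite /Re_inv divr_ge0 // addr_ge0 ?sqr_ge0. Qed.

Lemma Re_inv_le_inv_cabs z : Re_inv z <= (cabs z)^-1.
Proof.
rewrite /Re_inv -sqr_cabs.
have [->|cz0] := eqVneq (cabs z) 0; first by rewrite expr0n /= invr0 mulr0.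
have cz : 0 < cabs z by rewrite lt_neqAle eq_sym cz0 cabs_ge0.
rewrite ler_pdivrMr ?exprn_gt0 // expr2 mulrA mulVf // mul1r.
exact: le_trans (ler_norm _) (abs_fst_le_cabs z).
Qed.

Lemma Re_inv_le_inv z r : 0 < r -> r < cabs z -> Re_inv z <= r^-1.
Proof.
move=> r0 rz; apply: le_trans (Re_inv_le_inv_cabs z) _.
by rewrite lef_pV2 ?posrE ?ltW // (lt_trans r0).
Qed.

Lemma Re_inv_le_div_sqr_snd z : 0 <= z.1 -> z.2 != 0 -> Re_inv z <= z.1 / z.2 ^+ 2.
Proof.
move=> x0 y0; have y2 : 0 < z.2 ^+ 2 by rewrite exprn_even_gt0.
by rewrite /Re_inv ler_wpM2l // lef_pV2 ?lerDr ?sqr_ge0 ?posrE ?ltr_wpDl ?sqr_ge0.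
Qed.

End inverse_real_part.

Lemma lebesgue_stieltjes_measure_itvoc {R : realType} (F : cumulative R R)
    (a b : R) :
  a <= b -> lebesgue_stieltjes_measure F `]a, b]%classic = (F b - F a)%:E.
Proof.
move=> ab; rewrite /lebesgue_stieltjes_measure /measure_extension /=.
by rewrite measurable_mu_extE /=; [exact: wlength_itv_bnd|exact: is_ocitv].
Qed.

Section lebesgue_stieltjes_pushforward.
Context {d} {T : measurableType d} {R : realType}.
Variables (mu : {measure set T -> \bar R}) (h : T -> measurableTypeR R).
Variables (F : cumulative R R) (a b : R).
Hypothesis mh : measurable_fun [set: T] h.
Hypothesis Fh : forall y, a <= y <= b -> (F y)%:E = mu [set x | h x <= y].

Let measurable_h_le y : measurable [set x | h x <= y].
Proof.
rewrite -[X in measurable X]setTI (_ : [set x | _] = h @^-1` `]-oo, y]).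
  by apply: mh => //; exact: measurable_itv.
by apply/seteqP; split => x; rewrite /= in_itv.
Qed.

Lemma pushforward_itvoc c e : a <= c -> c <= e -> e <= b ->
  pushforward mu h `]c, e] = (F e - F c)%:E.
Proof.
move=> ac ce eb; rewrite /pushforward.
have -> : h @^-1` `]c, e] = [set x | h x <= e] `\` [set x | h x <= c].
  apply/seteqP; split => x /=; rewrite in_itv /=.
    by move=> /andP[/lt_geF -> ->].
  by move=> [-> /negP]; rewrite -ltNge => ->.
have Fe : (F e)%:E = mu [set x | h x <= e] by apply: Fh; lra.
have Fc : (F c)%:E = mu [set x | h x <= c] by apply: Fh; lra.
rewrite measureD //; last by move: (ltry (F e)); rewrite Fe.
rewrite setIidr; last by move=> x /= /le_trans; apply.
by rewrite EFinB Fe Fc.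
Qed.

Lemma lebesgue_stieltjes_measure_pushforward (A : set (measurableTypeR R)) :
  measurable A -> A `<=` `]a, b] ->
  lebesgue_stieltjes_measure F A = pushforward mu h A.
Proof.
move=> mA /setIidl <-.
have mD : measurable (`]a, b]%classic : set (measurableTypeR R)).
  by apply: sub_sigma_algebra; exact: is_ocitv.
pose m1 := mrestr (lebesgue_stieltjes_measure F) mD.
pose m2 := mrestr (pushforward mu h) mD.
suff : forall X, measurable X -> m1 X = m2 X by apply.
move=> X mX; apply: (@measure_unique _ R (measurableTypeR R) R.-ocitv.-measurable
  (fun k : nat => `](- k%:R), k%:R]%classic) _ _ _ _ m1 m2 _ _ X mX) => //.
- by move=> ? ? ? ?; exact: measurableI.
- by move=> k; exact: is_ocitv.
- apply/seteqP; split => // x _.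
  exists (Num.bound `|x|) => //=; rewrite in_itv /=.
  have := archi_boundP (normr_ge0 x); have := ler_norm x; have := ler_norm (- x).
  rewrite normrN; lra.
- move=> _ [[x y] _ <-] /=; rewrite /m1 /m2 /mrestr /=.
  have -> : `]x, y]%classic `&` `]a, b]%classic =
            `](Order.max x a), (Order.min y b)]%classic :> set R.
    apply/seteqP; split => t /=; rewrite !in_itv /= gt_max le_min.
      by move=> [/andP[-> ->] /andP[-> ->]].
    by move=> /andP[/andP[-> ->] /andP[-> ->]].
  have [ab|ba] := leP (Order.max x a) (Order.min y b); last first.
    by rewrite set_itv_ge ?bnd_simp -?leNgt ?ltW // !measure0.
  rewrite lebesgue_stieltjes_measure_itvoc // pushforward_itvoc //.
    by rewrite le_max lexx orbT.
  by rewrite ge_min lexx orbT.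
- move=> k; rewrite /m1 /mrestr /=.
  have mk : measurable (`](- k%:R), k%:R]%classic : set (measurableTypeR R)).
    by apply: sub_sigma_algebra; exact: is_ocitv.
  apply: (@le_lt_trans _ _ (lebesgue_stieltjes_measure F `](- k%:R), k%:R]%classic)).
    by apply: le_measure; rewrite ?inE //; exact: measurableI.
  by rewrite lebesgue_stieltjes_measure_itvoc ?ltry // (@le_trans _ _ 0) ?oppr_le0.
Qed.

Lemma integral_lebesgue_stieltjes_pushforward (f : R -> \bar R) :
  measurable_fun [set: R] f -> (forall y, (0 <= f y)%E) ->
  (\int[lebesgue_stieltjes_measure F]_(y in `]a, b]) f y =
   \int[mu]_(x in h @^-1` `]a, b]) f (h x))%E.
Proof.
move=> mf f0; rewrite -ge0_integral_pushforward //; last exact: measurable_funTS.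
by apply: eq_measure_integral => A mA; exact: lebesgue_stieltjes_measure_pushforward.
Qed.

End lebesgue_stieltjes_pushforward.

Definition Qsym {R : realType} (q : R -> R) (y : R) : R := q y + q (- y).

Section Qsym.
Context {R : realType}.
Variable q : R -> R.

Lemma Qsym_normr (y : R) : Qsym q `|y| = Qsym q y.
Proof. by rewrite /Qsym; case: (ger0P y) => _; rewrite ?opprK // addrC. Qed.

Lemma Re_inv_le_Qsym (z : R * R) :
  (forall y, 0 <= q y) -> 0 <= z.1 <= q z.2 -> z.2 != 0 ->
  Re_inv z <= Qsym q `|z.2| / `|z.2| ^+ 2.
Proof.
move=> q0 /andP[x0 xq] y0; rewrite Qsym_normr real_normK ?num_real //.
apply: le_trans (Re_inv_le_div_sqr_snd _ x0 y0) _.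
by rewrite ler_wpM2r ?invr_ge0 ?sqr_ge0 // /Qsym (le_trans xq) // lerDl.
Qed.

End Qsym.

Section lrh_bound.
Variables (R : realType) (q : R -> R) (mu0 : {measure set (R * R) -> \bar R}).
Variables (C : R) (F : cumulative R R).
Hypotheses (cq : continuous q) (q_ge0 : forall y, 0 <= q y).
Hypothesis mu0_supp : mu0 (~` closure (Dq q)) = 0%E.
Hypothesis mu_i_le : forall y, 0 <= y -> (mu_i mu0 y <= (C * y)%:E)%E.
Hypothesis F_mu_i : forall y, 0 <= y -> (F y)%:E = mu_i mu0 y.

Local Notation lrh_in r R' :=
  (lrh_set r R' `&` [set z : R * R | (`|z.2| <= r)%R]).
Local Notation lrh_out r R' :=
  (lrh_set r R' `&` [set z : R * R | (r < `|z.2|)%R]).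

Let measurable_lrh_in r R' : measurable (lrh_in r R').
Proof.
by apply: measurableI; [exact: measurable_lrh_set|exact: measurable_abs_snd_le].
Qed.

Let measurable_lrh_out r R' : measurable (lrh_out r R').
Proof.
apply: measurableI; first exact: measurable_lrh_set.
rewrite (_ : [set z | _] = ~` [set z : R * R | `|z.2| <= r]).
  by apply: measurableC; exact: measurable_abs_snd_le.
by apply/seteqP; split => z /=; rewrite ltNge => /negP.
Qed.

Let measurable_Re_invE : measurable_fun [set: R * R] (fun z => (Re_inv z)%:E).
Proof. by apply/measurable_EFinP; exact: measurable_Re_inv. Qed.

Lemma lrh_in_le r R' : 0 < r ->
  (\int[mu0]_(z in lrh_in r R') (Re_inv z)%:E <= C%:E)%E.
Proof.
move=> r0.
apply: (@le_trans _ _ (\int[mu0]_(z in lrh_in r R') (r^-1)%:E)%E).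
  apply: ge0_le_integral => //.
  - by move=> z [[_ /ltW x0] _]; rewrite lee_fin Re_inv_ge0.
  - exact: measurable_funTS.
  - by move=> z [[/andP[rz _] _] _]; rewrite lee_fin Re_inv_le_inv.
have muA : (mu0 (lrh_in r R') <= (C * r)%:E)%E.
  apply: le_trans (mu_i_le r (ltW r0)).
  by apply: le_measure; rewrite ?inE //; exact: measurable_abs_snd_le.
rewrite integral_cst //; apply: le_trans (lee_wpmul2l _ muA) _.
  by rewrite lee_fin invr_ge0 ltW.
by rewrite -EFinM mulrCA mulVf ?gt_eqF // mulr1.
Qed.

Lemma lrh_out_le r R' : 0 < r ->
  (\int[mu0]_(z in lrh_out r R') (Re_inv z)%:E <=
   \int[lebesgue_stieltjes_measure F]_(y in `]r, R']) (Qsym q y / y ^+ 2)%:E)%E.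
Proof.
move=> r0.
pose g y := (Qsym q y / y ^+ 2)%:E.
have g_ge0 y : (0 <= g y)%E by rewrite lee_fin divr_ge0 ?sqr_ge0 ?addr_ge0.
have mg : measurable_fun [set: R] g.
  have mq : measurable_fun [set: R] q := continuous_measurable_fun cq.
  apply/measurable_EFinP; apply: measurable_funM.
    by apply: measurable_funD => //; exact: measurableT_comp mq _.
  exact: measurableT_comp measurable_inv _.
have mgh : measurable_fun [set: R * R] (fun z => g `|z.2|).
  exact: measurableT_comp mg measurable_abs_snd.
have F_abs_snd y : r <= y <= R' -> (F y)%:E = mu0 [set z | `|z.2| <= y].
  by move=> /andP[ry _]; rewrite F_mu_i // (le_trans (ltW r0)).
rewrite (integral_lebesgue_stieltjes_pushforward _ _ _ _ _
  measurable_abs_snd F_abs_snd) //.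
apply: (@le_trans _ _ (\int[mu0]_(z in lrh_out r R') g `|z.2|%R)%E).
  apply: ae_ge0_le_integral => //.
  - by move=> z [[_ /ltW x0] _]; rewrite lee_fin Re_inv_ge0.
  - exact: measurable_funTS.
  - exact: measurable_funTS.
  exists (~` closure (Dq q)); split => //.
    apply: open_measurable_pair; rewrite openC; exact: closed_closure.
  move=> z /= nPz cz; apply: nPz => -[[_ x0] ry].
  have xq : z.1 <= q z.2 := closure_Dq_sub q cq z cz.
  by rewrite lee_fin Re_inv_le_Qsym // ?(ltW x0) ?xq // -normr_gt0 (lt_trans r0).
apply: ge0_subset_integral => //.
- rewrite -[X in measurable X]setTI.
  by apply: measurable_abs_snd => //; exact: measurable_itv.
- exact: measurable_funTS.
- move=> z [[/andP[_ zR'] _] rz] /=; rewrite in_itv /= rz.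
  exact: le_trans (abs_snd_le_cabs z) zR'.
Qed.

Lemma lrh_le r R' : 0 < r ->
  (lrh mu0 r R' <=
   \int[lebesgue_stieltjes_measure F]_(y in `]r, R']) (Qsym q y / y ^+ 2)%:E
   + C%:E)%E.
Proof.
move=> r0; rewrite /lrh.
have -> : lrh_set r R' = lrh_out r R' `|` lrh_in r R'.
  rewrite -setIUr (_ : _ `|` _ = setT) ?setIT //.
  by apply/seteqP; split => // z _ /=; case: (ltP r `|z.2|); [left|right].
rewrite ge0_integral_setU //.
- by apply: leeD; [exact: lrh_out_le|exact: lrh_in_le].
- exact: measurable_funTS.
- by move=> z [] [[_ /ltW x0] _]; rewrite lee_fin Re_inv_ge0.
- rewrite disj_set2E; apply/eqP/seteqP; split => // z [[_ rz] [_ zr]].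
  by have := lt_le_trans rz zr; rewrite ltxx.
Qed.

End lrh_bound.

Theorem lemma3 (R : realType) (r0 : R) (q : R -> R)
  (mu0 : {measure set (R * R) -> \bar R}) (C : R) (F : cumulative R R) :
  0 < r0 ->
  continuous q ->
  (forall y, 0 <= q y) ->
  (* limsup_{|y| -> +oo} q(y)/|y| < 1 *)
  (exists2 a : R, a < 1 & exists M : R, forall y, M <= `|y| -> q y / `|y| <= a) ->
  (* supp mu0 is contained in the closure of D_q *)
  mu0 (~` closure (Dq q)) = 0%E ->
  (forall y, 0 <= y -> (mu_i mu0 y <= (C * y)%:E)%E) ->
  (* F is the (real-valued) distribution function mu0^i on [0,+oo) *)
  (forall y, 0 <= y -> (F y)%:E = mu_i mu0 y) ->
  exists2 C0 : R, 0 <= C0 &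
    forall r R' : R, r0 <= r -> r < R' ->
      (lrh mu0 r R' <=
         \int[lebesgue_stieltjes_measure F]_(y in `]r, R']) ((q y + q (- y)) / y ^+ 2)%:E
         + C0%:E)%E.
Proof.
move=> r0_gt0 cq q_ge0 _ mu0_supp mu_i_le F_mu_i.
have C_ge0 : 0 <= C.
  rewrite -lee_fin -[C]mulr1; apply: le_trans (mu_i_le 1 ler01).
  exact: measure_ge0.
exists C => // r R' r0r _.
exact: lrh_le (lt_le_trans r0_gt0 r0r).
Qed.
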